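(* For each $D=DC_i^{\pm}(n,q)$ with $N=|D|$ and a fixed ordering $g_1,\dots,g_N$ of $D$, the $\mathbb F_3$-linear map $\mathbb F_q\to\mathbb F_3^N$, $a\mapsto c(a)=(\mathrm{tr}(a\,\mathrm{Tr}\,g_1),\dots,\mathrm{tr}(a\,\mathrm{Tr}\,g_N))$, is injective (hence an $\mathbb F_3$-linear isomorphism of $\mathbb F_q$ onto $C(D)^\perp=\{c(a):a\in\mathbb F_q\}$) in each of the following cases, for all $q$: (1) $i=1,2,3$, sign $+$, $n\ge2$ even; (2) $i=4$, sign $+$, $n\ge4$ even; (3) $i=1$, sign $-$, $n\ge1$ odd; (4) $i=2,3,4$, sign $-$, $n\ge3$ odd.
   Context: $q=3^s$, $\mathrm{tr}:\mathbb F_q\to\mathbb F_3$ the absolute trace, $\mathrm{Tr}$ the matrix trace. Fix a nonsquare $\epsilon\in\mathbb F_q^*$, $\delta_\epsilon=\mathrm{diag}(1,-\epsilon)$, $J=\begin{bmatrix}0&1_{n-1}&0\\1_{n-1}&0&0\\0&0&\delta_\epsilon\end{bmatrix}$, $O^-(2n,q)=\{w\in GL(2n,q):{}^twJw=J\}$, $SO^-$ its determinant-one subgroup. $Q=Q(2n,q)$: products $\begin{bmatrix}A&0&0\\0&{}^tA^{-1}&0\\0&0&i\end{bmatrix}\begin{bmatrix}1_{n-1}&B&-{}^th\delta_\epsilon\\0&1_{n-1}&0\\0&h&1_2\end{bmatrix}$, $A\in GL(n-1,q)$, $i\in SO^-(2,q)$, ${}^tB+B+{}^th\delta_\epsilon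 h=0$. $\rho=\mathrm{diag}(1_{n-1},1_{n-1},1,-1)$, $\sigma_r=\begin{bmatrix}0&0&1_r&0&0\\0&1_{n-1-r}&0&0&0\\1_r&0&0&0&0\\0&0&0&1_{n-1-r}&0\\0&0&0&0&1_2\end{bmatrix}$. $DC_1^{\pm}=Q\sigma_{n-1}Q$, $DC_2^{\pm}=Q\sigma_{n-2}Q$, $DC_3^{\pm}=\rho Q\sigma_{n-2}Q$, $DC_4^{\pm}=\rho Q\sigma_{n-3}Q$, with sign $+$ for $n$ even and $-$ for $n$ odd; $Q\sigma Q=\{x\sigma y\}$, $\rho Q\sigma Q=\{\rho x\sigma y\}$, $x,y\in Q$. The ternary code is $C(D)=\{u\in\mathbb F_3^N:\sum_j u_j\,\mathrm{Tr}(g_j)=0\text{ in }\mathbb F_q\}$ and $C(D)^\perp$ its dual in $\mathbb F_3^N$ under the standard inner product. *)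

From HB Require Import structures.
From mathcomp Require Import all_boot all_order all_algebra all_field.
Unset Printing Implicit Defensive.
Import GRing.Theory.
Local Open Scope ring_scope.

Section OrthCode.
Variable F : finFieldType.

(* absolute trace F_q -> F_3 (values in the prime subfield of F), q = 3^s *)
Definition abstr (x : F) : F := \sum_(k < logn 3 #|F|) x ^+ (3 ^ k).

(* matrices of size 2n = (n-1) + (n-1) + 2 *)
Notation mdim n := (n.-1 + n.-1 + 2)%N.

Definition blk3 m (X11 : 'M[F]_(m, m)) (X12 : 'M[F]_(m, m)) (X13 : 'M[F]_(m, 2))
  (X21 : 'M[F]_(m, m)) (X22 : 'M[F]_(m, m)) (X23 : 'M[F]_(m, 2))
  (X31 : 'M[F]_(2, m)) (X32 : 'M[F]_(2, m)) (X33 : 'M[F]_2) : 'M[F]_(m + m + 2) :=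
  block_mx (block_mx X11 X12 X21 X22) (col_mx X13 X23) (row_mx X31 X32) X33.

Definition delta (eps : F) : 'M[F]_2 :=
  \matrix_(i < 2, j < 2) (if i == j then (if val i == 0%N then 1 else - eps) else 0).

Definition Jmat (eps : F) n : 'M[F]_(mdim n) :=
  blk3 n.-1 0 1%:M 0 1%:M 0 0 0 0 (delta eps).

Definition Ominus (eps : F) n (w : 'M[F]_(mdim n)) : bool :=
  (w \in unitmx) && (w^T *m Jmat eps n *m w == Jmat eps n).
Definition SOminus (eps : F) n (w : 'M[F]_(mdim n)) : bool :=
  Ominus eps n w && (\det w == 1).

Definition SO2minus (eps : F) (i : 'M[F]_2) : bool :=
  (i \in unitmx) && (i^T *m delta eps *m i == delta eps) && (\det i == 1).

(* the parabolic subgroup Q(2n,q) *)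
Definition Qset (eps : F) n : {set 'M[F]_(mdim n)} :=
  [set x | [exists A : 'M[F]_(n.-1), [exists B : 'M[F]_(n.-1),
     [exists h : 'M[F]_(2, n.-1), [exists i : 'M[F]_2,
       [&& A \in unitmx, SO2minus eps i,
           B^T + B + h^T *m delta eps *m h == 0 &
           x == blk3 n.-1 A 0 0 0 (invmx A)^T 0 0 0 i
                *m blk3 n.-1 1%:M B (- (h^T *m delta eps)) 0 1%:M 0 0 h 1%:M]]]]]].

Definition rho n : 'M[F]_(mdim n) :=
  \matrix_(i, j) (if i == j then (if val i == (n.-1 + n.-1 + 1)%N then -1 else 1)
                  else 0).

Definition swapidx (m r k : nat) : nat :=
  if (k < r)%N then (k + m)%N
  else if (m <= k)%N && (k < m + r)%N then (k - m)%N else k.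

Definition sigma n (r : nat) : 'M[F]_(mdim n) :=
  \matrix_(i, j) ((val i == swapidx n.-1 r (val j)) %:R).

Definition QsQ eps n (s : 'M[F]_(mdim n)) : {set 'M[F]_(mdim n)} :=
  [set g | [exists x, [exists y,
     [&& x \in Qset eps n, y \in Qset eps n & g == x *m s *m y]]]].
Definition rQsQ eps n (s : 'M[F]_(mdim n)) : {set 'M[F]_(mdim n)} :=
  [set g | [exists x, [exists y,
     [&& x \in Qset eps n, y \in Qset eps n & g == rho n *m x *m s *m y]]]].

(* DC_i^{\pm}(n,q), i = 1..4 (sign determined by parity of n) *)
Definition DC eps n (i : nat) : {set 'M[F]_(mdim n)} :=
  match i with
  | 1 => QsQ eps n (sigma n n.-1)
  | 2 => QsQ eps n (sigma n (n.-1).-1)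
  | 3 => rQsQ eps n (sigma n (n.-1).-1)
  | _ => rQsQ eps n (sigma n ((n.-1).-1).-1)
  end.

Definition codeword eps n i (a : F) : seq F :=
  [seq abstr (a * \tr g) | g <- enum (DC eps n i)].

End OrthCode.

Arguments abstr {F}.
Arguments blk3 {F m}.
Arguments delta {F}.
Arguments Jmat {F}.
Arguments Ominus {F}.
Arguments SOminus {F}.
Arguments SO2minus {F}.
Arguments Qset {F}.
Arguments rho {F}.
Arguments swapidx : clear implicits.
Arguments sigma {F}.
Arguments QsQ {F}.
Arguments rQsQ {F}.
Arguments DC {F}.
Arguments codeword {F}.

From HB Require Import structures.
From mathcomp Require Import all_boot all_order all_algebra all_field.
From mathcomp Require Import abelian pgroup zify.
Import GRing.Theory.
Local Open Scope ring_scope.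

(* Let q = #|F| = 3^s and c = a - b for two field elements with c(a) = c(b).
   Since the absolute trace tr is additive, tr(c Tr g) = 0 for every g in D,
   and we must show c = 0.  For c <> 0 the map x |-> tr(c x) is the evaluation
   of a nonzero polynomial of degree 3^(s-1) = q/3, so each of its level sets
   has at most q/3 elements.  Hence tr(c (K + f t)) cannot vanish for all t in
   a set A as soon as the image f(A) has more than q/3 elements.
   The proof exhibits in each double coset D a one-parameter family of
   elements whose traces are K + f t with such an f: K + t^2 (unipotent
   elements of Q, when sigma_r moves the first block), K + 2a(t) where
   (a(t), b(t)) parametrizes the norm-one conic a^2 - eps b^2 = 1 (torus of
   SO^-(2,q), when sigma_0 is the identity), or (n-1)(t + 1/t) (diagonal
   elements of Q, in the remaining small cases rho Q sigma_0 Q). *)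

Lemma card_le_double_image (T U : finType) (f : T -> U) (g : T -> T) (A : {set T}) :
  {in A &, forall x y, f x = f y -> y = x \/ y = g x} -> (#|A| <= 2 * #|f @: A|)%N.
Proof.
move=> fib2; rewrite -sum1_card (partition_big_imset f) /= mulnC -sum_nat_const.
apply: leq_sum => _ /imsetP [x xA ->]; rewrite sum1_card.
apply: (@leq_trans #|[set x; g x]|); last by rewrite cards2; case: (_ != _).
apply: subset_leq_card; apply/subsetP => y; rewrite inE => /andP [yA /eqP fyx].
by rewrite !inE; case: (fib2 x y xA yA (esym fyx)) => ->; rewrite eqxx ?orbT.
Qed.

Section TraceForm.
Context {F : finFieldType}.
Hypothesis pchar3 : (3%N \in [pchar F])%R.
Local Notation s := (logn 3 #|F|).
Local Notation p := (3 ^ s.-1)%N.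

(* The additive group of F is an elementary abelian 3-group, so q = 3^s. *)
Lemma card_field : #|F| = (3 ^ s)%N.
Proof.
have /abelem_pgroup F3 := fin_ring_pchar_abelem pchar3.
by have := @card_pgroup _ 3 (fingroup.setT_group _) F3; rewrite cardsT.
Qed.

Lemma logn_card_gt0 : (0 < s)%N.
Proof.
by rewrite lt0n; apply/eqP => s0; move: (finNzRing_gt1 F); rewrite card_field s0.
Qed.

Lemma card_field3 : #|F| = (3 * p)%N.
Proof. by rewrite -expnS prednK ?logn_card_gt0 // -card_field. Qed.

Lemma three0 : (3%:R : F) = 0.
Proof. exact: pcharf0 pchar3. Qed.

Lemma two_neq0 : (2%:R : F) != 0.
Proof.
apply/eqP => two0; have := three0; rewrite -addn1 natrD two0 add0r.
by move/eqP; rewrite oner_eq0.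
Qed.

Lemma abstrD (x y : F) : abstr (x + y) = abstr x + abstr y.
Proof.
rewrite /abstr -big_split /=; apply: eq_bigr => k _.
by apply: exprDn_pchar; rewrite pnatX pnatE // pchar3.
Qed.

Lemma abstrN (x : F) : abstr (- x) = - abstr x.
Proof.
apply/eqP; rewrite -subr_eq0 opprK -abstrD addNr /abstr.
by rewrite big1 // => k _; rewrite expr0n expn_eq0.
Qed.

Definition trace_poly (c : F) : {poly F} :=
  \sum_(k < s) (c ^+ (3 ^ k)) *: 'X^(3 ^ k).

Lemma trace_polyE c x : (trace_poly c).[x] = abstr (c * x).
Proof.
rewrite /trace_poly horner_sum /abstr; apply: eq_bigr => k _.
by rewrite hornerZ hornerXn exprMn.
Qed.

Lemma size_trace_poly c : c != 0 -> size (trace_poly c) = p.+1.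
Proof.
move=> c0; have s_gt0 := logn_card_gt0.
rewrite /trace_poly -(prednK s_gt0) big_ord_recr /=.
rewrite addrC size_polyDl size_scale ?expf_neq0 // size_polyXn //.
rewrite ltnS (leq_trans (size_sum _ _ _)) //; apply/bigmax_leqP => k _.
by rewrite (leq_trans (size_scale_leq _ _)) // size_polyXn ltn_exp2l.
Qed.

Lemma abstr_level_card (c K : F) (S : {set F}) : c != 0 ->
  {in S, forall x, abstr (c * x) = K} -> (#|S| <= p)%N.
Proof.
move=> c0 levS; pose P := trace_poly c - K%:P.
have szP : size P = p.+1.
  rewrite /P size_polyDl size_trace_poly // size_polyN ltnS.
  by rewrite (leq_trans (size_polyC_leq1 _)) // expn_gt0.
have P0 : P != 0 by rewrite -size_poly_eq0 szP.
rewrite -ltnS -szP cardE; apply: max_poly_roots P0 _ (enum_uniq _).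
apply/allP => x; rewrite mem_enum => xS.
by rewrite /root /P hornerD hornerN hornerC trace_polyE levS // subrr.
Qed.

Lemma abstr_detects_image (c K : F) {f : F -> F} {A : {set F}} : c != 0 ->
  (p < #|f @: A|)%N -> exists2 t, t \in A & abstr (c * (K + f t)) != 0.
Proof.
move=> c0 big.
have [t /andP [tA nz] | all0] := pickP [pred t | (t \in A) && (abstr (c * (K + f t)) != 0)].
  by exists t.
suff : (#|f @: A| <= p)%N by rewrite leqNgt big.
apply: (@abstr_level_card c (- abstr (c * K))) => // _ /imsetP [t tA ->].
have /negbFE/eqP tr0 : (abstr (c * (K + f t)) != 0) = false by have := all0 t; rewrite /= tA.
by apply/eqP; rewrite -subr_eq0 opprK addrC -abstrD -mulrDr tr0.
Qed.

(* The squares form more than a third of F: t^2 = u^2 forces u = t or u = -t. *)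
Lemma card_image_sqr : (p < #|(fun t : F => t ^+ 2) @: [set: F]|)%N.
Proof.
have le_card : (#|[set: F]| <= 2 * #|(fun t : F => t ^+ 2) @: [set: F]|)%N.
  apply: (@card_le_double_image _ _ _ (fun t => - t)) => x y _ _ /eqP.
  by rewrite eq_sym eqf_sqr => /orP [] /eqP ->; [left | right].
have p_gt0 : (0 < p)%N by rewrite expn_gt0.
move: le_card p_gt0; rewrite cardsT; have := card_field3.
by move: p => p' ->; lia.
Qed.

Lemma joukowski_fiber (x y : F) : x != 0 -> y != 0 ->
  x + x^-1 = y + y^-1 -> y = x \/ y = x^-1.
Proof.
move=> x0 y0 exy.
have : (x - y) * (1 - (x * y)^-1) = 0.
  rewrite mulrBr mulr1 invfM mulrBl mulrA mulfV // mul1r.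
  by rewrite mulrCA mulfV // mulr1 opprB addrACA -opprD exy subrr.
move/eqP; rewrite mulf_eq0 !subr_eq0 => /orP [/eqP -> | /eqP xy1]; first by left.
right; apply: (mulfI x0); rewrite mulfV //.
by rewrite -[x * y]invrK -xy1 invr1.
Qed.

(* The values t + 1/t, t <> 0, form more than a third of F; for q = 3 this
   uses that the two values 2 and -2 are distinct. *)
Lemma card_image_joukowski : (p < #|(fun t : F => (t + t^-1)%R) @: [set~ (0%R : F)]|)%N.
Proof.
have le_card : (#|[set~ (0%R : F)]| <= 2 * #|(fun t : F => (t + t^-1)%R) @: [set~ (0%R : F)]|)%N.
  apply: (@card_le_double_image _ _ _ (fun t => t^-1)) => x y.
  rewrite !in_setC1; exact: joukowski_fiber.
have two_values : (2 <= #|(fun t : F => (t + t^-1)%R) @: [set~ (0%R : F)]|)%N.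
  apply: (@leq_trans #|[set (2%:R : F); - 2%:R]|).
    rewrite cards2; case: eqP => // two_opp.
    have : (2%:R + 2%:R : F) = 1.
      by rewrite -natrD -[(2 + 2)%N]/(3 + 1)%N natrD three0 add0r.
    by rewrite {1}two_opp addNr => /eqP; rewrite eq_sym oner_eq0.
  apply: subset_leq_card; apply/subsetP => z; rewrite !inE => /orP [] /eqP ->.
    by apply/imsetP; exists 1; rewrite ?in_setC1 ?oner_eq0 // invr1 -natr1 addrC.
  apply/imsetP; exists (-1); rewrite ?in_setC1 ?oppr_eq0 ?oner_eq0 //.
  by rewrite invrN invr1 -opprD -natr1 addrC.
move: le_card two_values; rewrite cardsC1; have := card_field3.
by move: p => p' ->; lia.
Qed.

Section NormOneConic.
Variable eps : F.
Hypothesis eps_nsq : ~~ [exists y : F, y ^+ 2 == eps].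

Lemma conic_den_neq0 t : 1 - eps * t ^+ 2 != 0.
Proof.
rewrite subr_eq0; apply: contra eps_nsq => one_eq; apply/existsP.
have t0 : t != 0.
  by apply: contraTneq one_eq => ->; rewrite expr0n /= mulr0 oner_eq0.
exists t^-1; rewrite exprVn; apply/eqP/(mulIf (expf_neq0 2 t0)).
by rewrite mulVf ?expf_neq0 //; apply/eqP.
Qed.

Definition conic_a (t : F) : F := (1 + eps * t ^+ 2) / (1 - eps * t ^+ 2).
Definition conic_b (t : F) : F := (t + t) / (1 - eps * t ^+ 2).

Lemma conic_norm t : conic_a t ^+ 2 - eps * conic_b t ^+ 2 = 1.
Proof.
have d0 := conic_den_neq0 t.
rewrite /conic_a /conic_b; set u := eps * t ^+ 2.
rewrite !expr_div_n [eps * (_ / _)]mulrA -mulrBl.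
apply: (canLR (mulfK _)); first by rewrite expf_neq0.
have twice (x : F) : x + x = x * (1 + 1) by rewrite mulrDr mulr1.
have diff_sq : (1 + u) ^+ 2 - (1 - u) ^+ 2 = eps * (t + t) ^+ 2.
  rewrite subr_sqr opprB [1 + u + (u - 1)]addrC addrA subrK.
  rewrite addrACA subrr addr0 (twice u) (twice t) exprMn mulrA -/u.
  by rewrite -mulrA -expr2.
by rewrite mul1r -diff_sq opprB addrC subrK.
Qed.

Lemma conic_a_fiber x y : conic_a x = conic_a y -> y = x \/ y = - x.
Proof.
rewrite /conic_a => /eqP; rewrite eqr_div ?conic_den_neq0 // => /eqP.
set u := eps * x ^+ 2; set v := eps * y ^+ 2.
rewrite !mulrDl !mulrDr !mul1r !mulr1 !mulrN [v * u]mulrC !addrA => /addIr.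
rewrite -!addrA => /addrI /eqP; rewrite addrC -subr_eq0 opprD opprK addrA.
rewrite -addrA -mulr2n -mulr_natr mulf_eq0 (negbTE two_neq0) orbF.
rewrite subr_eq0 /u /v => /eqP exy.
have eps0 : eps != 0.
  apply: contra eps_nsq => /eqP eps0; apply/existsP; exists 0.
  by rewrite eps0 expr0n.
move/mulfI: exy => /(_ eps0) /eqP; rewrite eq_sym eqf_sqr.
by case/orP => /eqP ->; [left | right].
Qed.

Lemma card_image_conic :
  (p < #|(fun t : F => (conic_a t + conic_a t)%R) @: [set: F]|)%N.
Proof.
have le_card : (#|[set: F]| <= 2 * #|(fun t : F => (conic_a t + conic_a t)%R) @: [set: F]|)%N.
  apply: (@card_le_double_image _ _ _ (fun t => - t)) => x y _ _.
  have twice z : z + z = z * 2%:R by rewrite mulr_natr mulr2n.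
  by rewrite !twice => /(mulIf two_neq0) /conic_a_fiber.
have p_gt0 : (0 < p)%N by rewrite expn_gt0.
move: le_card p_gt0; rewrite cardsT; have := card_field3.
by move: p => p' ->; lia.
Qed.

End NormOneConic.

Lemma codeword_injective k (D : {set 'M[F]_k}) :
  (forall c : F, c != 0 -> exists2 g, g \in D & abstr (c * \tr g) != 0) ->
  injective (fun a : F => [seq abstr (a * \tr g) | g <- enum D]).
Proof.
move=> detects a b /eq_in_map eq_ab; apply/eqP; rewrite -subr_eq0.
apply/negPn/negP => /detects [g gD].
by rewrite mulrBl abstrD abstrN eq_ab ?mem_enum // subrr eqxx.
Qed.

End TraceForm.

Section BlockTrace.
Context {F : finFieldType}.
Variable n : nat.
Local Notation m := n.-1.

Lemma swapidx_lt r k : (r <= m)%N -> (k < m + m + 2)%N ->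
  (swapidx m r k < m + m + 2)%N.
Proof.
move=> hr hk; rewrite /swapidx; case: ifP => k_lt_r.
  by rewrite (leq_trans _ (leq_addr 2 _)) // ltn_add2r (leq_trans k_lt_r).
case: ifP => // /andP [_ _]; exact: leq_ltn_trans (leq_subr _ _) hk.
Qed.

Definition swap_ord {r} (hr : (r <= m)%N) (k : 'I_(m + m + 2)) : 'I_(m + m + 2) :=
  Ordinal (@swapidx_lt r k hr (ltn_ord k)).

Lemma mul_sigma_diag r (hr : (r <= m)%N) (M : 'M[F]_(m + m + 2)) k :
  (M *m sigma n r) k k = M k (swap_ord hr k).
Proof.
rewrite mxE (bigD1 (swap_ord hr k)) //= mxE eqxx mulr1 big1 ?addr0 // => j hj.
rewrite mxE; case: eqP => [ej|]; last by rewrite mulr0.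
by case/eqP: hj; apply: val_inj.
Qed.

Lemma swap_ord_last r (hr : (r <= m)%N) j :
  swap_ord hr (rshift (m + m) j) = rshift (m + m) j.
Proof.
apply: val_inj; rewrite /= /swapidx.
have -> : (m + m + j < r)%N = false.
  by apply/negbTE; rewrite -leqNgt (leq_trans hr) // -addnA leq_addr.
have -> : (m + m + j < m + r)%N = false.
  by apply/negbTE; rewrite -leqNgt -addnA leq_add2l (leq_trans hr) // leq_addr.
by rewrite andbF.
Qed.

Lemma tr_blk3_sigma r (hr : (r <= m)%N) X11 X12 X13 X21 X22 X23 X31 X32
    (X33 : 'M[F]_2) :
  \tr (blk3 X11 X12 X13 X21 X22 X23 X31 X32 X33 *m sigma n r) =
  \sum_(j < m) (if (j < r)%N then X12 j j else X11 j j) +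
  \sum_(j < m) (if (j < r)%N then X21 j j else X22 j j) + \tr X33.
Proof.
rewrite /mxtrace big_split_ord big_split_ord /=.
congr (_ + _ + _); apply: eq_bigr => j _; rewrite mul_sigma_diag.
- case: ifP => hj.
    have -> : swap_ord hr (lshift 2 (lshift m j)) = lshift 2 (rshift m j).
      by apply: val_inj; rewrite /= /swapidx hj addnC.
    by rewrite /blk3 block_mxEul block_mxEur.
  have -> : swap_ord hr (lshift 2 (lshift m j)) = lshift 2 (lshift m j).
    by apply: val_inj; rewrite /= /swapidx hj (leqNgt m j) (ltn_ord j).
  by rewrite /blk3 block_mxEul block_mxEul.
- have nlt : (m + j < r)%N = false.
    by apply/negbTE; rewrite -leqNgt (leq_trans hr) // leq_addr.
  case: ifP => hj.
    have -> : swap_ord hr (lshift 2 (rshift m j)) = lshift 2 (lshift m j).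
      by apply: val_inj; rewrite /= /swapidx nlt leq_addr ltn_add2l hj /= addKn.
    by rewrite /blk3 block_mxEul block_mxEdl.
  have -> : swap_ord hr (lshift 2 (rshift m j)) = lshift 2 (rshift m j).
    by apply: val_inj; rewrite /= /swapidx nlt ltn_add2l hj andbF.
  by rewrite /blk3 block_mxEul block_mxEdr.
- by rewrite swap_ord_last /blk3 block_mxEdr.
Qed.

Lemma tr_blk3_sigma0 X11 X12 X13 X21 X22 X23 X31 X32 (X33 : 'M[F]_2) :
  \tr (blk3 X11 X12 X13 X21 X22 X23 X31 X32 X33 *m sigma n 0) =
  \tr X11 + \tr X22 + \tr X33.
Proof. exact: tr_blk3_sigma (leq0n m) _ _ _ _ _ _ _ _ _. Qed.

(* The last index, where rho has its entry -1. *)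
Definition last_idx : 'I_(m + m + 2) := rshift (m + m) 1.

Lemma blk3_sigma_last r (hr : (r <= m)%N) X11 X12 X13 X21 X22 X23 X31 X32
    (X33 : 'M[F]_2) :
  (blk3 X11 X12 X13 X21 X22 X23 X31 X32 X33 *m sigma n r) last_idx last_idx = X33 1 1.
Proof. by rewrite mul_sigma_diag /last_idx swap_ord_last /blk3 block_mxEdr. Qed.

Lemma tr_rho (N : 'M[F]_(m + m + 2)) :
  \tr (rho n *m N) = \tr N - N last_idx last_idx *+ 2.
Proof.
rewrite /mxtrace (bigD1 last_idx) //= [in RHS](bigD1 last_idx) //=.
have rhoN k : (rho n *m N) k k =
    (if val k == (m + m + 1)%N then - N k k else N k k).
  rewrite mxE (bigD1 k) //= big1 ?addr0 => [|j hj]; last first.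
    by rewrite mxE eq_sym (negbTE hj) mul0r.
  by rewrite mxE eqxx; case: ifP; rewrite ?mulN1r ?mul1r.
rewrite rhoN /= eqxx (eq_bigr (fun k => N k k)) => [|k hk]; last first.
  rewrite rhoN; case: ifP => // /eqP ek; case/eqP: hk; apply: val_inj.
  by rewrite /= ek addn1.
by rewrite addrAC mulr2n opprD addrA subrr add0r.
Qed.

End BlockTrace.

Section SO2.
Context {F : finFieldType}.
Variable eps : F.

Lemma mul2E p q (M : 'M[F]_(p, 2)) (N : 'M[F]_(2, q)) i j :
  (M *m N) i j = M i 0 * N 0 j + M i 1 * N 1 j.
Proof.
rewrite mxE big_ord_recl big_ord1.
by have -> : lift ord0 (ord0 : 'I_1) = 1 :> 'I_2 by apply: val_inj.
Qed.

Lemma ord2P (i : 'I_2) : i = 0 \/ i = 1.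
Proof. by case: i => [[|[|//]] Hi]; [left|right]; apply: val_inj. Qed.

Lemma det2 (M : 'M[F]_2) : \det M = M 0 0 * M 1 1 - M 0 1 * M 1 0.
Proof.
rewrite (expand_det_row M 0) big_ord_recl big_ord1 /cofactor !det_mx11 !mxE /=.
have -> : lift (0 : 'I_2) (0 : 'I_1) = 1 by apply: val_inj.
have -> : lift (1 : 'I_2) (0 : 'I_1) = 0 by apply: val_inj.
by rewrite expr0 expr1 mul1r mulN1r mulrN.
Qed.

(* The matrix [[a, eps b], [b, a]]: multiplication by a + b sqrt(eps). *)
Definition norm_mx (a b : F) : 'M[F]_2 := \matrix_(i < 2, j < 2)
  (if val i == 0%N then (if val j == 0%N then a else eps * b)
   else (if val j == 0%N then b else a)).

Lemma tr_norm_mx a b : \tr (norm_mx a b) = a + a.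
Proof. by rewrite /mxtrace big_ord_recl big_ord1 !mxE. Qed.

Lemma norm_mx_SO2 a b : a ^+ 2 - eps * b ^+ 2 = 1 -> SO2minus eps (norm_mx a b).
Proof.
move=> norm1; have det1 : \det (norm_mx a b) = 1.
  by rewrite det2 !mxE /=; rewrite !expr2 mulrA in norm1.
rewrite /SO2minus unitmxE det1 unitr1 eqxx andbT /=.
apply/eqP/matrixP => i j.
case: (ord2P i) => ->; case: (ord2P j) => ->; rewrite !mul2E !mxE /=;
  rewrite !mulr1 !mulr0 !addr0 !add0r !mulrN !mulNr.
- by rewrite -norm1 !expr2 [b * eps]mulrC mulrA.
- by apply/eqP; rewrite subr_eq0 [a * _]mulrC [b * eps]mulrC.
- by apply/eqP; rewrite subr_eq0 [a * eps]mulrC mulrAC.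
- rewrite -[RHS]mulr1 -norm1 mulNr mulrBr opprB addrC [RHS]addrC.
  congr (- _ + _); first by rewrite [a * eps]mulrC -mulrA -expr2.
  by rewrite -mulrA [b * (eps * b)]mulrCA expr2.
Qed.

Lemma SO2_1 : SO2minus eps 1%:M.
Proof. by rewrite /SO2minus unitmx1 trmx1 mul1mx mulmx1 det1 !eqxx. Qed.

End SO2.

Section Parabolic.
Context {F : finFieldType}.
Variables (eps : F) (n : nat).
Local Notation m := n.-1.

Lemma blk3_1 : blk3 (m := m) 1%:M 0 0 0 1%:M 0 0 0 (1%:M : 'M[F]_2) = 1%:M.
Proof. by rewrite /blk3 col_mx0 row_mx0 -!scalar_mx_block. Qed.

Lemma levi_in_Q (A : 'M[F]_m) i : A \in unitmx -> SO2minus eps i ->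
  blk3 A 0 0 0 (invmx A)^T 0 0 0 i \in Qset eps n.
Proof.
move=> uA si; rewrite inE; apply/existsP; exists A; apply/existsP; exists 0.
apply/existsP; exists 0; apply/existsP; exists i.
by rewrite uA si /= !trmx0 mulmx0 !addr0 eqxx /= mul0mx oppr0 blk3_1 mulmx1.
Qed.

Lemma unipotent_in_Q (B : 'M[F]_m) h : B^T + B + h^T *m delta eps *m h == 0 ->
  blk3 1%:M B (- (h^T *m delta eps)) 0 1%:M 0 0 h 1%:M \in Qset eps n.
Proof.
move=> hB; rewrite inE; apply/existsP; exists 1%:M; apply/existsP; exists B.
apply/existsP; exists h; apply/existsP; exists 1%:M.
by rewrite unitmx1 SO2_1 hB invmx1 trmx1 blk3_1 mul1mx eqxx.
Qed.

Lemma one_in_Q : 1%:M \in Qset eps n.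
Proof.
by have := @unipotent_in_Q 0 0; rewrite !trmx0 mulmx0 !addr0 eqxx mul0mx oppr0 blk3_1; apply.
Qed.

Lemma mem_QsQ x s : x \in Qset eps n -> x *m s \in QsQ eps n s.
Proof.
move=> xQ; rewrite inE; apply/existsP; exists x; apply/existsP; exists 1%:M.
by rewrite xQ one_in_Q mulmx1 eqxx.
Qed.

Lemma mem_rQsQ x s : x \in Qset eps n -> rho n *m x *m s \in rQsQ eps n s.
Proof.
move=> xQ; rewrite inE; apply/existsP; exists x; apply/existsP; exists 1%:M.
by rewrite xQ one_in_Q mulmx1 eqxx.
Qed.

End Parabolic.

Section Detection.
Context {F : finFieldType}.
Hypothesis pchar3 : (3%N \in [pchar F])%R.
Variable eps : F.
Hypothesis eps_nsq : ~~ [exists y : F, y ^+ 2 == eps].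
Variable n : nat.
Local Notation m := n.-1.
Variable c : F.
Hypothesis c0 : c != 0.

(* The unipotent element U_t of Q with B = t^2 E_11 and h = t E_11; the
   relation B^T + B + h^T delta h = 3 t^2 E_11 = 0 holds in characteristic 3. *)
Definition unip_B (t : F) : 'M[F]_m :=
  \matrix_(i, j) (if (val i == 0%N) && (val j == 0%N) then t ^+ 2 else 0).
Definition unip_h (t : F) : 'M[F]_(2, m) :=
  \matrix_(i, j) (if (val i == 0%N) && (val j == 0%N) then t else 0).
Definition unip (t : F) : 'M[F]_(m + m + 2) :=
  blk3 1%:M (unip_B t) (- ((unip_h t)^T *m delta eps)) 0 1%:M 0 0 (unip_h t) 1%:M.

Lemma unip_in_Q t : unip t \in Qset eps n.
Proof.
apply: unipotent_in_Q; apply/eqP/matrixP => i j.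
rewrite mxE mul2E mul2E mul2E !mxE /= !mulr0 ?mul0r !addr0 mulr1 andbC.
case: (val i == 0%N); case: (val j == 0%N) => /=; rewrite ?mulr0 ?mul0r ?addr0 //.
rewrite -expr2 -[t ^+ 2]mul1r -!mulrDl.
have -> : (1 + 1 + 1 : F) = 3%:R by rewrite !mulrS mulr0n addr0 addrA.
by rewrite (three0 pchar3) mul0r.
Qed.

(* When r > 0, sigma_r brings the entry t^2 of B onto the diagonal. *)
Lemma tr_unip_sigma r : (0 < r <= m)%N ->
  exists K, forall t, \tr (unip t *m sigma n r) = K + t ^+ 2.
Proof.
case/andP => r0 hr.
pose K := \sum_(j < m) (if (j < r)%N then 0 else (1%:M : 'M[F]_m) j j).
exists (K + \sum_(j < m) (if (j < r)%N then (0 : 'M[F]_m) j j else (1%:M : 'M[F]_m) j j)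
          + \tr (1%:M : 'M[F]_2)) => t.
rewrite /unip tr_blk3_sigma //.
have -> : \sum_(j < m) (if (j < r)%N then unip_B t j j else (1%:M : 'M[F]_m) j j)
    = t ^+ 2 + K.
  pose j0 : 'I_m := Ordinal (leq_trans r0 hr).
  rewrite (eq_bigr (fun j : 'I_m => (if val j == 0%N then t ^+ 2 else 0) +
     (if (j < r)%N then 0 else (1%:M : 'M[F]_m) j j))) => [|j _]; last first.
    rewrite /unip_B mxE andbb; case: ifP => [_|hj]; first by rewrite addr0.
    by rewrite (_ : val j == 0%N = false) ?add0r //; apply: contraFF hj => /eqP ->.
  rewrite big_split /= (bigD1 j0) //= big1 ?addr0 // => j hj.
  by case: eqP => // ej; case/eqP: hj; apply: val_inj.
by rewrite [RHS]addrC !addrA.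
Qed.

Lemma QsQ_detects_unip r : (0 < r <= m)%N ->
  exists2 g, g \in QsQ eps n (sigma n r) & abstr (c * \tr g) != 0.
Proof.
move=> hr; have [K trK] := tr_unip_sigma r hr.
have [t _ nz] := abstr_detects_image pchar3 c K c0 (card_image_sqr pchar3).
by exists (unip t *m sigma n r); [exact: mem_QsQ (unip_in_Q t) | rewrite trK].
Qed.

Lemma rQsQ_detects_unip r : (0 < r <= m)%N ->
  exists2 g, g \in rQsQ eps n (sigma n r) & abstr (c * \tr g) != 0.
Proof.
move=> hr; have [K trK] := tr_unip_sigma r hr.
have [t _ nz] := abstr_detects_image pchar3 c (K - 1 *+ 2) c0 (card_image_sqr pchar3).
exists (rho n *m unip t *m sigma n r); first exact: mem_rQsQ (unip_in_Q t).
case/andP: hr => _ hr.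
by rewrite -mulmxA tr_rho trK /unip blk3_sigma_last // mxE /= addrAC.
Qed.

(* When r = 0, sigma_0 = 1 and the torus element with anisotropic block
   norm_mx (a t) (b t) has trace K + 2 a(t). *)
Definition torus (t : F) : 'M[F]_(m + m + 2) :=
  blk3 1%:M 0 0 0 (invmx 1%:M)^T 0 0 0 (norm_mx eps (conic_a eps t) (conic_b eps t)).

Lemma QsQ_detects_torus :
  exists2 g, g \in QsQ eps n (sigma n 0) & abstr (c * \tr g) != 0.
Proof.
pose K := \tr (1%:M : 'M[F]_m) + \tr (invmx (1%:M : 'M[F]_m))^T.
have [t _ nz] := abstr_detects_image pchar3 c K c0 (card_image_conic pchar3 eps eps_nsq).
exists (torus t *m sigma n 0); last by rewrite /torus tr_blk3_sigma0 tr_norm_mx.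
apply/mem_QsQ/levi_in_Q; first by rewrite unitmx1.
exact/norm_mx_SO2/conic_norm.
Qed.

(* For r = 0 and rho, the diagonal element diag(t, 1/t, 1) has trace
   (n-1)(t + 1/t), a nonzero multiple of t + 1/t when 0 < n - 1 < 3. *)
Definition diag_elt (t : F) : 'M[F]_(m + m + 2) :=
  blk3 t%:M 0 0 0 (invmx (t%:M : 'M[F]_m))^T 0 0 0 1%:M.

Lemma tr_rho_diag_elt t :
  \tr (rho n *m diag_elt t *m sigma n 0) = m%:R * (t + t^-1).
Proof.
rewrite -mulmxA tr_rho /diag_elt tr_blk3_sigma0 blk3_sigma_last // mxtrace_tr.
rewrite invmx_scalar !mxtrace_scalar mxE /=.
by rewrite -addrA subrr addr0 -mulrnDl mulr_natl.
Qed.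

Lemma rQsQ_detects_diag : (0 < m < 3)%N ->
  exists2 g, g \in rQsQ eps n (sigma n 0) & abstr (c * \tr g) != 0.
Proof.
move=> hm; have m0 : (m%:R : F) != 0.
  case/andP: hm; case: (m) => [//|[|[|//]]] _ _; first by rewrite oner_neq0.
  exact: two_neq0 pchar3.
have cm0 : c * m%:R != 0 by rewrite mulf_neq0.
have [t t0 nz] := abstr_detects_image pchar3 (c * m%:R) 0 cm0 (card_image_joukowski pchar3).
rewrite in_setC1 in t0.
exists (rho n *m diag_elt t *m sigma n 0).
  apply/mem_rQsQ/levi_in_Q; last exact: SO2_1.
  by rewrite unitmxE det_scalar unitfE expf_neq0.
by rewrite tr_rho_diag_elt mulrA -(add0r (t + _)).
Qed.

Lemma QsQ_detects r : (r <= m)%N ->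
  exists2 g, g \in QsQ eps n (sigma n r) & abstr (c * \tr g) != 0.
Proof. by case: r => [|r] hr; [exact: QsQ_detects_torus | exact: QsQ_detects_unip]. Qed.

Lemma rQsQ_detects r : (r <= m)%N -> (0 < r)%N || (0 < m < 3)%N ->
  exists2 g, g \in rQsQ eps n (sigma n r) & abstr (c * \tr g) != 0.
Proof.
case: r => [|r] hr /= hm; first exact: rQsQ_detects_diag.
exact: rQsQ_detects_unip.
Qed.

End Detection.

Theorem theorem14 (F : finFieldType) (pchar3 : (3%N \in [pchar F])%R)
  (eps : F) (eps_nz : eps != 0) (eps_nsq : ~~ [exists y : F, y ^+ 2 == eps])
  (n i : nat)
  (hcase : [|| [&& (i \in [:: 1; 2; 3]%N), ~~ odd n & (2 <= n)%N],
              [&& (i == 4)%N, ~~ odd n & (4 <= n)%N],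
              [&& (i == 1)%N, odd n & (1 <= n)%N]
            | [&& (i \in [:: 2; 3; 4]%N), odd n & (3 <= n)%N]]) :
  injective (codeword eps n i).
Proof.
apply: (codeword_injective pchar3) => c c0.
have detect := QsQ_detects pchar3 eps eps_nsq n c c0.
have rdetect := rQsQ_detects pchar3 eps n c c0.
case: i hcase => [|[|[|[|[|i]]]]] /=; rewrite ?inE /= => hcase.
- by case: (odd n) hcase.
- exact: detect (leqnn _).
- exact: detect (leq_pred _).
- apply: rdetect (leq_pred _) _; case: (odd n) hcase => /= hn; lia.
- apply: rdetect; case: (odd n) hcase => /= hn; lia.
- by case: (odd n) hcase.
Qed.
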